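(* If $f_0,f_1,\dots,f_t\in F\langle X\rangle$ are $M_n$-locally linearly dependent while $f_1,\dots,f_t$ are $M_n$-locally linearly independent, then there exist central polynomials $c_0,c_1,\dots,c_t$ of $M_n$ such that $c_0$ is not a polynomial identity of $M_n$ and $\sum_{i=0}^tc_if_i$ is a polynomial identity of $M_n$.
   Context: $F$ is a field of characteristic $0$, $M_n=M_n(F)$, $F\langle X\rangle$ the free algebra on noncommuting $X=\{x_1,x_2,\dots\}$. Polynomials $f_1,\dots,f_t\in F\langle x_1,\dots,x_m\rangle$ are $M_n$-locally linearly dependent if $f_1(r_1,\dots,r_m),\dots,f_t(r_1,\dots,r_m)$ are linearly dependent over $F$ for all $r_1,\dots,r_m\in M_n$, and $M_n$-locally linearly independent otherwise. A central polynomial of $M_n$ is an element of $F\langle X\rangle$ all of whose evaluations in $M_n$ are scalar matrices; a polynomial identity is one all of whose evaluations are $0$. *)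

From HB Require Import structures.
From mathcomp Require Import all_boot all_order all_algebra.
Set Implicit Arguments. Unset Strict Implicit. Unset Printing Implicit Defensive.
Import Order.TTheory GRing.Theory Num.Theory.
Local Open Scope ring_scope.

(* Noncommutative polynomials in the free algebra F<x_0, x_1, ...>,
   represented as formal finite sums of monomials: a list of pairs
   (coefficient, word), a word being the list of indices of the variables. *)
Definition ncpoly (F : Type) := seq (F * seq nat).

Definition ncadd (F : Type) (p q : ncpoly F) : ncpoly F := p ++ q.

Definition ncmul (F : pzRingType) (p q : ncpoly F) : ncpoly F :=
  [seq (m.1 * m'.1, m.2 ++ m'.2) | m <- p, m' <- q].

Definition ncsum (F : Type) (k : nat) (g : 'I_k -> ncpoly F) : ncpoly F :=
  flatten [seq g i | i <- enum 'I_k].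

Definition ncword_eval (F : pzRingType) (n : nat) (r : nat -> 'M[F]_n)
  (w : seq nat) : 'M[F]_n := \prod_(j <- w) r j.

Definition nceval (F : pzRingType) (n : nat) (r : nat -> 'M[F]_n)
  (p : ncpoly F) : 'M[F]_n := \sum_(m <- p) m.1 *: ncword_eval r m.2.

Definition loc_lin_dep (F : fieldType) (n k : nat) (g : 'I_k -> ncpoly F) :=
  forall r : nat -> 'M[F]_n,
    exists a : 'I_k -> F, (exists i, a i != 0) /\
      \sum_(i < k) a i *: nceval r (g i) = 0.

Definition loc_lin_indep (F : fieldType) (n k : nat) (g : 'I_k -> ncpoly F) :=
  ~ loc_lin_dep n g.

Definition central_poly (F : fieldType) (n : nat) (c : ncpoly F) :=
  forall r : nat -> 'M[F]_n, is_scalar_mx (nceval r c).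

Definition poly_identity (F : fieldType) (n : nat) (c : ncpoly F) :=
  forall r : nat -> 'M[F]_n, nceval r c = 0.

From HB Require Import structures.
From mathcomp Require Import all_boot all_order all_fingroup all_algebra.
From Stdlib Require Import Classical.
Set Implicit Arguments. Unset Strict Implicit. Unset Printing Implicit Defensive.
Import GRing.Theory.
Local Open Scope ring_scope.

(* Proof of the theorem via a Capelli-type central polynomial (n = m + 1 and
   N = n^2 throughout).

   The Capelli-type sum  capelli x y = sum_s sgn s y_0 x_s(0) y_1 ... x_s(N-1) y_N
   is multilinear and alternating in the matrices x_0, ..., x_(N-1), hence equals
   det(coordinates of the x_k) *: core y.  Inserting a matrix W cyclically into
   it gives a polynomial  central_cap x y W; a trace-duality argument together
   with Jacobi's formula for the derivative of a determinant shows that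
   central_cap x y W is the scalar  n * det(coordinates of x) * tr(core y * W).

   The central polynomials c_i are obtained by substituting into the x-slots
   the family f_1, ..., f_t (with f_0 in place of f_i for i > 0) completed by
   fresh variables.  Then c_i evaluates to +-kappa * det A_i, and Cramer's rule
   applied to a local linear dependence of f_0, ..., f_t makes sum_i c_i f_i
   vanish.  Finally c_0 is not an identity: evaluate the f's at a point where
   f_1, ..., f_t are linearly independent, complete their coordinate rows to an
   invertible matrix with the fresh variables, and use an explicit choice of
   matrix units making core y = E_00 (here characteristic 0 gives n != 0). *)

Section NcEval.
Variables (F : fieldType) (n : nat).
Implicit Types (r : nat -> 'M[F]_n) (p q : ncpoly F).

Lemma ncword_eval_cat r w w' :
  ncword_eval r (w ++ w') = ncword_eval r w * ncword_eval r w'.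
Proof. by rewrite /ncword_eval big_cat. Qed.

Lemma nceval_cat r p q : nceval r (p ++ q) = nceval r p + nceval r q.
Proof. by rewrite /nceval big_cat. Qed.

Lemma nceval_mul r p q : nceval r (ncmul p q) = nceval r p * nceval r q.
Proof.
rewrite /nceval /ncmul big_allpairs_dep mulr_suml; apply: eq_bigr => m _.
rewrite mulr_sumr; apply: eq_bigr => m' _ /=.
by rewrite ncword_eval_cat -!mulmxE -scalemxAl -scalemxAr scalerA.
Qed.

Lemma nceval_sum r k (g : 'I_k -> ncpoly F) :
  nceval r (ncsum g) = \sum_i nceval r (g i).
Proof. by rewrite /ncsum /nceval big_flatten /= big_map big_enum. Qed.

Definition ncscale (a : F) p : ncpoly F := [seq (a * m.1, m.2) | m <- p].

Lemma nceval_scale r a p : nceval r (ncscale a p) = a *: nceval r p.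
Proof.
rewrite /nceval big_map scaler_sumr; apply: eq_bigr => m _ /=.
by rewrite scalerA.
Qed.

Definition ncone : ncpoly F := [:: (1, [::])].
Definition ncvar (j : nat) : ncpoly F := [:: (1, [:: j])].

Lemma nceval_one r : nceval r ncone = 1.
Proof. by rewrite /nceval big_seq1 /ncword_eval big_nil scale1r. Qed.

Lemma nceval_var r j : nceval r (ncvar j) = r j.
Proof. by rewrite /nceval big_seq1 /ncword_eval big_seq1 scale1r. Qed.

Definition ncprod (l : seq (ncpoly F)) : ncpoly F := foldr (@ncmul F) ncone l.

Lemma nceval_prod r l : nceval r (ncprod l) = \prod_(q <- l) nceval r q.
Proof.
elim: l => [|q l IH] /=; first by rewrite big_nil nceval_one.
by rewrite nceval_mul IH big_cons.
Qed.

Definition ncsubst (s : nat -> ncpoly F) p : ncpoly F :=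
  flatten [seq ncscale m.1 (ncprod [seq s j | j <- m.2]) | m <- p].

Lemma nceval_subst r s p :
  nceval r (ncsubst s p) = nceval (fun j => nceval r (s j)) p.
Proof.
elim: p => [|m p IH]; first by rewrite /nceval !big_nil.
rewrite /ncsubst /= nceval_cat -/(ncsubst s p) IH /nceval big_cons.
by rewrite -/(nceval _ _) nceval_scale nceval_prod big_map.
Qed.

Definition ncvar_bound p : nat := (sumn (flatten [seq m.2 | m <- p])).+1.

Lemma nceval_agree p r r' :
  (forall j, (j < ncvar_bound p)%N -> r j = r' j) -> nceval r p = nceval r' p.
Proof.
move=> rr'; rewrite /nceval big_seq [RHS]big_seq.
apply: eq_bigr => m mp; congr (_ *: _).
rewrite /ncword_eval big_seq [RHS]big_seq; apply: eq_bigr => j jm; apply: rr'.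
rewrite ltnS; have : j \in flatten [seq m.2 | m <- p] by apply/flatten_mapP; exists m.
elim: (flatten _) => [|a s IH] //=; rewrite in_cons => /orP[/eqP ->|/IH].
  exact: leq_addr.
by move/leq_trans; apply; exact: leq_addl.
Qed.

End NcEval.

Section RowUpdate.
Variables (F : fieldType) (p : nat).
Implicit Types (C L A : 'M[F]_p) (u : 'rV[F]_p).

Definition rowupd C (i : 'I_p) u : 'M[F]_p :=
  \matrix_(k, j) if k == i then u 0 j else C k j.

Lemma row_rowupd C i u : row i (rowupd C i u) = u.
Proof. by apply/rowP => e; rewrite !mxE eqxx. Qed.

Lemma det_rowupd C i u : \det (rowupd C i u) = \sum_j u 0 j * cofactor C i j.
Proof.
rewrite (expand_det_row _ i); apply: eq_bigr => j _; rewrite mxE eqxx.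
congr (_ * _); rewrite /cofactor; congr (_ * \det _).
by apply/matrixP => a b; rewrite !mxE eq_sym (negbTE (neq_lift _ _)).
Qed.

Lemma det_rowupd_adj C i u : \det (rowupd C i u) = (u *m \adj C) 0 i.
Proof. by rewrite det_rowupd mxE; apply: eq_bigr => e _; rewrite [\adj C e i]mxE. Qed.

Lemma cramer_rows C u : \det C *: u = \sum_j \det (rowupd C j u) *: row j C.
Proof.
under eq_bigr do rewrite det_rowupd_adj.
by rewrite -mulmx_sum_row -mulmxA mul_adj_mx mul_mx_scalar.
Qed.

(* Jacobi's formula: the derivative of det along C |-> C L is tr L * det C *)
Lemma det_deriv C L :
  \sum_i \det (rowupd C i (row i C *m L)) = \tr L * \det C.
Proof.
have -> : \sum_i \det (rowupd C i (row i C *m L)) = \tr ((C *m L) *m \adj C).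
  rewrite /mxtrace; apply: eq_bigr => i _; rewrite det_rowupd mxE.
  by apply: eq_bigr => j _; rewrite -row_mul mxE [\adj C j i]mxE.
by rewrite mxtrace_mulC mulmxA mul_adj_mx mul_scalar_mx mxtraceZ mulrC.
Qed.

(* the trace form is nondegenerate: a matrix acting on traces like c is c%:M *)
Lemma trace_scalar A c : (forall Z, \tr (Z *m A) = \tr Z * c) -> A = c%:M.
Proof.
move=> trA; apply/matrixP => a b; have := trA (delta_mx b a).
rewrite /mxtrace (bigD1 b) //= big1 ?addr0; last first.
  by move=> k /negbTE kb; rewrite mxE big1 // => l _; rewrite mxE kb mul0r.
rewrite mxE (bigD1 a) //= big1 ?addr0; last first.
  by move=> l /negbTE la; rewrite mxE la andbF mul0r.
rewrite !mxE !eqxx mul1r => ->.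
rewrite (bigD1 b) //= big1 ?addr0; last by move=> k /negbTE kb; rewrite mxE kb.
by rewrite mxE eqxx /= eq_sym; case: (a == b); rewrite ?mul1r ?mul0r.
Qed.

End RowUpdate.

Section Capelli.
Variables (F : fieldType) (m : nat).
Local Notation n := m.+1.
Local Notation N := (n * n)%N.
Local Notation MM := 'M[F]_n.

Definition coord_mx (x : nat -> MM) : 'M[F]_N :=
  \matrix_(k < N, e < N) mxvec (x k) 0 e.

Definition mxunit (e : 'I_N) : MM := vec_mx (delta_mx 0 e).

Lemma mxunit_decomp (X : MM) : X = \sum_e mxvec X 0 e *: mxunit e.
Proof.
rewrite -{1}(mxvecK X) {1}(matrix_sum_delta (mxvec X)) big_ord1 linear_sum.
by apply: eq_bigr => e _; rewrite linearZ.
Qed.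

Definition permn (s : 'S_N) (j : nat) : nat := s (inord j).

Definition cap_fac (s : 'S_N) (x y : nat -> MM) j : MM := x (permn s j) * y j.+1.

Definition capelli (x y : nat -> MM) : MM :=
  \sum_(s : 'S_N) ((-1) ^+ s : F) *: (y 0%N * \prod_(0 <= j < N) cap_fac s x y j).

Definition funmx (g : {ffun 'I_N -> 'I_N}) : 'M[F]_N := \matrix_(i, e) (g i == e)%:R.

(* the coefficient of det (coord_mx x) in capelli x y *)
Definition capelli_core (y : nat -> MM) : MM :=
  \sum_(g : {ffun 'I_N -> 'I_N})
     \det (funmx g) *: (y 0%N * \prod_(j < N) (mxunit (g j) * y j.+1)).

Lemma capelli_core_agree (y y' : nat -> MM) :
  (forall j, (j <= N)%N -> y j = y' j) -> capelli_core y = capelli_core y'.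
Proof.
move=> yy'; apply: eq_bigr => g _; rewrite yy' //; congr (_ *: (_ * _)).
by apply: eq_bigr => j _; rewrite yy'.
Qed.

(* expanding each x_s(j) in the basis of matrix units *)
Lemma cap_prod_expand (s : 'S_N) (x y : nat -> MM) :
  \prod_(0 <= j < N) cap_fac s x y j =
  \sum_(g : {ffun 'I_N -> 'I_N}) (\prod_(j < N) coord_mx x (s j) (g j)) *:
     \prod_(j < N) (mxunit (g j) * y j.+1).
Proof.
rewrite big_mkord.
have -> : \prod_(j < N) cap_fac s x y j =
    \prod_(j < N) \sum_(e < N) coord_mx x (s j) e *: (mxunit e * y j.+1).
  apply: eq_bigr => j _; rewrite /cap_fac /permn inord_val.
  rewrite (mxunit_decomp (x (s j))) mulr_suml.
  by apply: eq_bigr => e _; rewrite mxE -!mulmxE scalemxAl.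
by rewrite bigA_distr_bigA; apply: eq_bigr => g _; rewrite scaler_prod.
Qed.

Lemma det_coord_funmx (x : nat -> MM) g :
  \det (coord_mx x) * \det (funmx g) =
  \sum_(s : 'S_N) (-1) ^+ s * \prod_(j < N) coord_mx x (s j) (g j).
Proof.
rewrite -(det_tr (coord_mx x)) mulrC -det_mulmx /(\det _); apply: eq_bigr => s _.
congr (_ * _); apply: eq_bigr => i _.
rewrite !mxE (bigD1 (g i)) //= big1 ?addr0 ?mxE ?eqxx ?mul1r //.
by move=> e /negbTE ne; rewrite mxE eq_sym ne mul0r.
Qed.

(* capelli is multilinear alternating in the x's *)
Lemma capelli_det x y : capelli x y = \det (coord_mx x) *: capelli_core y.
Proof.
rewrite /capelli /capelli_core.
under eq_bigr do rewrite cap_prod_expand mulr_sumr scaler_sumr.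
rewrite exchange_big scaler_sumr; apply: eq_bigr => g _.
rewrite scalerA det_coord_funmx scaler_suml; apply: eq_bigr => s _.
by rewrite -scalerA -scalerAr.
Qed.

End Capelli.

Section CentralCapelli.
Variables (F : fieldType) (m : nat).
Local Notation n := m.+1.
Local Notation N := (n * n)%N.
Local Notation MM := 'M[F]_n.
Implicit Types (x y : nat -> MM) (Z W : MM).

Definition cap_insert x y Z : MM :=
  \sum_(s : 'S_N) \sum_(k < N) ((-1) ^+ s : F) *:
    ((y 0%N * \prod_(0 <= j < k) cap_fac s x y j) * Z *
      \prod_(k <= j < N) cap_fac s x y j).

Definition central_cap x y W : MM :=
  \sum_(s : 'S_N) \sum_(k < N) ((-1) ^+ s : F) *:
    (\prod_(k <= j < N) cap_fac s x y j * W *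
      (y 0%N * \prod_(0 <= j < k) cap_fac s x y j)).

Lemma trace_central_cap x y Z W :
  \tr (Z *m central_cap x y W) = \tr (cap_insert x y Z *m W).
Proof.
rewrite /central_cap /cap_insert mulmx_sumr mulmx_suml !raddf_sum.
apply: eq_bigr => s _; rewrite mulmx_sumr mulmx_suml !raddf_sum.
apply: eq_bigr => k _; rewrite /= -scalemxAr -scalemxAl !mxtraceZ; congr (_ * _).
move: (y 0%N * _) (\prod_(k <= j < N) _) => A B.
by rewrite -!mulmxE !mulmxA mxtrace_mulC !mulmxA.
Qed.

Definition lmul_at x (i : nat) Z : nat -> MM :=
  fun k => if k == i then Z * x k else x k.

(* cap_insert is the derivation of capelli along x |-> Z x *)
Lemma cap_insert_lmul x y Z : cap_insert x y Z = \sum_(i < N) capelli (lmul_at x i Z) y.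
Proof.
rewrite /capelli exchange_big /cap_insert; apply: eq_bigr => s _.
rewrite [RHS](reindex_inj (@perm_inj _ s)) /=.
apply: eq_bigr => k _; congr (_ *: _).
have permn_eq j : (j < N)%N -> (permn s j == s k :> nat) = (j == k).
  move=> jN; rewrite /permn val_eqE (inj_eq (@perm_inj _ s)).
  by rewrite -(inj_eq val_inj) /= inordK.
rewrite [in RHS](big_cat_nat (n:=k)) //=; last exact: ltnW (ltn_ord k).
rewrite [X in _ = _ * (_ * X)](big_ltn (ltn_ord k)).
have -> : \prod_(0 <= j < k) cap_fac s (lmul_at x (s k) Z) y j =
          \prod_(0 <= j < k) cap_fac s x y j.
  apply: eq_big_nat => j /andP[_ jk]; rewrite /cap_fac /lmul_at.
  by rewrite permn_eq ?(ltn_trans jk) // (ltn_eqF jk).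
have -> : \prod_(k.+1 <= j < N) cap_fac s (lmul_at x (s k) Z) y j =
          \prod_(k.+1 <= j < N) cap_fac s x y j.
  apply: eq_big_nat => j /andP[kj jN]; rewrite /cap_fac /lmul_at.
  by rewrite permn_eq // (gtn_eqF kj).
rewrite [in LHS](big_ltn (ltn_ord k)) /cap_fac /lmul_at permn_eq // eqxx.
by rewrite /permn inord_val !mulrA.
Qed.

Lemma coord_mx_lmul x (i : 'I_N) Z :
  coord_mx (lmul_at x i Z) =
  rowupd (coord_mx x) i (row i (coord_mx x) *m lin_mx (mulmx Z)).
Proof.
apply/matrixP => k j; rewrite [LHS]mxE [RHS]mxE /lmul_at.
case: (k =P i) => [->|/eqP ki]; rewrite ?eqxx.
  have -> : row i (coord_mx x) = mxvec (x i) by apply/rowP => e; rewrite !mxE.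
  by rewrite mul_vec_lin.
have -> : (k == i :> nat) = false by apply/negbTE; rewrite val_eqE.
by rewrite mxE.
Qed.

Lemma trace_lin_mulmx Z : \tr (lin_mx (@mulmx F n n n Z)) = n%:R * \tr Z.
Proof.
rewrite /mxtrace (reindex _ (curry_mxvec_bij _ _)) /=.
transitivity (\sum_(a < n) \sum_(b < n)
   lin_mx (@mulmx F n n n Z) (mxvec_index a b) (mxvec_index a b)).
  by rewrite pair_big; apply: eq_bigr => [[a b]] _.
rewrite mulr_natl -sumrMnl; apply: eq_bigr => a _.
have -> : Z a a *+ n = \sum_(b < n) Z a a by rewrite sumr_const card_ord.
apply: eq_bigr => b _.
rewrite mxE /= vec_mx_delta mxvecE mxE (bigD1 a) //= big1 ?addr0; last first.
  by move=> l /negbTE la; rewrite mxE la mulr0.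
by rewrite mxE !eqxx mulr1.
Qed.

Lemma central_cap_scalar x y W :
  central_cap x y W = (n%:R * \det (coord_mx x) * \tr (capelli_core y *m W))%:M.
Proof.
apply: trace_scalar => Z; rewrite trace_central_cap cap_insert_lmul.
under eq_bigr do rewrite capelli_det coord_mx_lmul.
rewrite -scaler_suml -scalemxAl mxtraceZ det_deriv trace_lin_mulmx.
by rewrite !mulrA [_ * \tr Z]mulrC.
Qed.

End CentralCapelli.

Section CoreWitness.
Variables (F : fieldType) (m : nat).
Local Notation n := m.+1.
Local Notation N := (n * n)%N.
Local Notation MM := 'M[F]_n.

Definition mxpos (j : nat) : 'I_n * 'I_n :=
  enum_val (cast_ord (esym (mxvec_cast n n)) (inord j)).

Lemma mxpos_index j : (j < N)%N -> mxvec_index (mxpos j).1 (mxpos j).2 = inord j.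
Proof.
move=> jN; rewrite /mxvec_index -surjective_pairing /mxpos enum_valK.
by rewrite cast_ordKV.
Qed.

Lemma mxpos_inj j j' : (j < N)%N -> (j' < N)%N -> (mxpos j == mxpos j') = (j == j').
Proof.
move=> jN j'N; apply/eqP/eqP => [e|->] //.
have := mxpos_index jN; rewrite e mxpos_index // => /(congr1 val).
by rewrite /= !inordK.
Qed.

Definition unit_seq (k : nat) : MM := @mxunit F m (inord k).

Lemma unit_seq_delta j : (j < N)%N -> unit_seq j = delta_mx (mxpos j).1 (mxpos j).2.
Proof. by move=> jN; rewrite /unit_seq /mxunit -mxpos_index // vec_mx_delta. Qed.

Lemma coord_unit_seq : coord_mx unit_seq = 1%:M.
Proof.
apply/matrixP => k e; rewrite !mxE /unit_seq /mxunit vec_mxK inord_val mxE eqxx /=.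
by rewrite eq_sym.
Qed.

(* y_j := the matrix unit linking unit_seq (j - 1) to unit_seq j, so that
   only the identity permutation gives a nonzero Capelli monomial *)
Definition chain_row (j : nat) : 'I_n := if j is j'.+1 then (mxpos j').2 else ord0.
Definition chain_col (j : nat) : 'I_n := if (j < N)%N then (mxpos j).1 else ord0.
Definition chain_seq (j : nat) : MM := delta_mx (chain_row j) (chain_col j).

Lemma chain_prefix (s : 'S_N) k : (k <= N)%N ->
  chain_seq 0 * \prod_(0 <= j < k) cap_fac s unit_seq chain_seq j =
  if all (fun j => permn s j == j) (iota 0 k) then delta_mx ord0 (chain_col k) else 0.
Proof.
have permn_lt j : (permn s j < N)%N by rewrite /permn ltn_ord.
elim: k => [|k IH] kN; first by rewrite big_nil mulr1.
have -> : iota 0 k.+1 = iota 0 k ++ [:: k] by rewrite -addn1 iotaD.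
rewrite all_cat /= andbT.
rewrite big_nat_recr // mulrA IH ?(ltnW kN) //.
case: (all _ _); last by rewrite mul0r.
rewrite /cap_fac unit_seq_delta // /chain_seq /= /chain_col kN.
have key : (permn s k == k) =
    ((mxpos k).1 == (mxpos (permn s k)).1) && ((mxpos (permn s k)).2 == (mxpos k).2).
  rewrite -(mxpos_inj (permn_lt k) kN) [mxpos (permn s k)]surjective_pairing.
  by case: (mxpos k) => a b; rewrite /= xpair_eqE eq_sym.
rewrite key -!mulmxE mulmxA mul_delta_mx_cond.
case: (_ == _); last by rewrite mulr0n mul0mx.
by rewrite mulr1n mul_delta_mx_cond; case: (_ == _).
Qed.

Lemma capelli_unit_chain : capelli unit_seq chain_seq = delta_mx ord0 ord0.
Proof.
rewrite /capelli (bigD1 (1%g : 'S_N)) //= [X in _ + X]big1 ?addr0; last first.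
  move=> s s1; rewrite chain_prefix //.
  case: ifP => [/allP fixs|]; last by rewrite scaler0.
  case/eqP: s1; apply/permP => i; rewrite perm1.
  have /fixs : val i \in iota 0 N by rewrite mem_iota /= ltn_ord.
  by rewrite /permn inord_val => /eqP /val_inj.
rewrite chain_prefix // odd_perm1 expr0 scale1r.
have -> : all (fun j => permn (1%g : 'S_N) j == j) (iota 0 N).
  by apply/allP => j; rewrite mem_iota /= => jN; rewrite /permn perm1 inordK.
by rewrite /chain_col ltnn.
Qed.

Lemma capelli_core_chain : capelli_core chain_seq = delta_mx ord0 ord0.
Proof.
by rewrite -capelli_unit_chain capelli_det coord_unit_seq det1 scale1r.
Qed.

End CoreWitness.

(* The central Capelli polynomial as an element of the free algebra, with
   x-variables x_0, ..., x_(N-1), y-variables x_N, ..., x_(2N) and W = x_(2N+1). *)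
Section CentralCapelliPoly.
Variables (F : fieldType) (m : nat).
Local Notation n := m.+1.
Local Notation N := (n * n)%N.
Local Notation MM := 'M[F]_n.

Definition cap_word (s : 'S_N) (l : seq nat) : seq nat :=
  flatten [seq [:: permn s j; (N + j.+1)%N] | j <- l].

Definition central_cap_word (s : 'S_N) (k : 'I_N) : seq nat :=
  cap_word s (index_iota k N) ++ [:: (N + N.+1)%N] ++
  ((N + 0)%N :: cap_word s (index_iota 0 k)).

Definition central_cap_poly : ncpoly F :=
  [seq (((-1) ^+ s : F), central_cap_word s k)
     | s : 'S_N <- index_enum 'S_N, k : 'I_N <- index_enum 'I_N].

Lemma eval_cap_word (r : nat -> MM) s l :
  ncword_eval r (cap_word s l) = \prod_(j <- l) cap_fac s r (fun j => r (N + j)%N) j.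
Proof.
elim: l => [|j l IH]; first by rewrite /cap_word /= /ncword_eval !big_nil.
rewrite [cap_word _ _]/= ncword_eval_cat IH big_cons.
by rewrite /ncword_eval big_cons big_seq1.
Qed.

Lemma eval_central_cap_poly (r : nat -> MM) :
  nceval r central_cap_poly = central_cap r (fun j => r (N + j)%N) (r (N + N.+1)%N).
Proof.
rewrite /nceval /central_cap_poly big_allpairs_dep; apply: eq_bigr => s _.
apply: eq_bigr => k _ /=; congr (_ *: _).
rewrite /central_cap_word !ncword_eval_cat !eval_cap_word.
rewrite /ncword_eval big_seq1 big_cons -/(ncword_eval r _) eval_cap_word.
by rewrite mulrA.
Qed.

End CentralCapelliPoly.

Section PartialCramer.
Variables (F : fieldType) (p t : nat) (tp : (t <= p)%N).
Implicit Types (A : 'M[F]_p) (u : 'rV[F]_p) (mu : 'I_t.+1 -> F).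
Local Notation top i := (widen_ord tp i).

Definition top_relation A u mu : Prop :=
  mu ord0 *: u + \sum_(i < t) mu (lift ord0 i) *: row (top i) A = 0.

Lemma det_rowupd_relation A u mu (j : 'I_p) :
  ~~ (j < t)%N -> (exists i, mu i != 0) -> top_relation A u mu ->
  \det (rowupd A j u) = 0.
Proof.
move=> jt [i0 nz0] rel; apply/eqP/det0P.
pose w : 'rV[F]_p := \row_k (if k == j then mu ord0
                             else if (k < t)%N then mu (inord k.+1) else 0).
have w_top (i : 'I_t) : w 0 (top i) = mu (lift ord0 i).
  rewrite mxE ifN; last by apply: contra jt => /eqP <-; exact: (ltn_ord i).
  rewrite /= ltn_ord; congr mu; apply: val_inj.
  by rewrite /= inordK // ltnS; exact: (ltn_ord i).
exists w.
  case: (unliftP ord0 i0) => [i' ->|->] in nz0.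
  - by apply: contraNneq nz0 => /rowP /(_ (top i')); rewrite w_top mxE => ->.
  - by apply: contraNneq nz0 => /rowP /(_ j); rewrite !mxE eqxx => ->.
rewrite mulmx_sum_row (bigD1 j) //= row_rowupd [w 0 j]mxE eqxx -[RHS]rel.
congr (_ + _).
have -> : \sum_(i < t) mu (lift ord0 i) *: row (top i) A =
          \sum_(k < p | (k < t)%N) w 0 k *: row k A.
  rewrite (big_ord_narrow (F := fun k => w 0 k *: row k A) tp) /=.
  by apply: eq_bigr => i _; rewrite w_top.
rewrite (bigID (fun k : 'I_p => (k < t)%N)) /= [X in _ + X]big1 ?addr0; last first.
  by move=> k /andP[kj kt]; rewrite !mxE (negbTE kj) (negbTE kt) scale0r.
apply: eq_big => [k|k /andP[kj _]].
  by case: (k =P j) => [->|]; rewrite ?(negbTE jt) ?andbF ?andbT.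
by congr (_ *: _); apply/rowP => e; rewrite !mxE (negbTE kj).
Qed.

Lemma cramer_partial A u mu :
  (exists i, mu i != 0) -> top_relation A u mu ->
  \det A *: u = \sum_(i < t) \det (rowupd A (top i) u) *: row (top i) A.
Proof.
move=> nz rel; rewrite cramer_rows (bigID (fun j : 'I_p => (j < t)%N)) /=.
rewrite [X in _ + X]big1 ?addr0 => [|j jt]; last first.
  by rewrite (det_rowupd_relation jt nz rel) scale0r.
by rewrite (big_ord_narrow (F := fun j => \det (rowupd A j u) *: row j A) tp).
Qed.

Lemma pid_row_top (X : 'rV[F]_t) (i : 'I_t) :
  (X *m pid_mx t) 0 (top i) = X 0 i.
Proof.
rewrite mxE (bigD1 i) //= big1 ?addr0; last first.
  by move=> l li; rewrite -(inj_eq val_inj) /= in li; rewrite mxE /= (negbTE li) mulr0.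
by rewrite mxE /= eqxx ltn_ord mulr1.
Qed.

Lemma pid_row_bottom (X : 'rV[F]_t) (k : 'I_p) :
  ~~ (k < t)%N -> (X *m pid_mx t) 0 k = 0.
Proof.
move=> kt; rewrite mxE big1 // => l _; rewrite mxE.
case: eqP => [e|]; last by rewrite mulr0.
by case/negP: kt; rewrite -e ltn_ord.
Qed.

Lemma completion (U : 'M[F]_(t, p)) (R : 'I_p -> 'rV[F]_p) :
  row_free U ->
  (forall i : 'I_t, R (top i) = row i U) ->
  (forall k : 'I_p, ~~ (k < t)%N -> R k = row k (row_ebase U)) ->
  \det (\matrix_(k < p) R k) != 0.
Proof.
move=> rfU RU RE; apply/det0P => -[v nzv vA]; case/eqP: nzv.
pose E := row_ebase U; pose L := col_ebase U.
have dU : U = L *m pid_mx t *m E by rewrite -{1}(mulmx_ebase U) (eqP rfU).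
pose v1 : 'rV[F]_t := \row_i v 0 (top i).
pose v2 : 'rV[F]_p := \row_k (if (k < t)%N then 0 else v 0 k).
have decomp : (v1 *m L *m pid_mx t + v2) *m E = 0.
  rewrite -vA mulmxDl -!mulmxA (mulmxA L) -dU !mulmx_sum_row.
  rewrite [RHS](bigID (fun k : 'I_p => (k < t)%N)) /=; congr (_ + _).
    rewrite (big_ord_narrow (F := fun k => v 0 k *: row k (\matrix_(k < p) R k)) tp).
    by apply: eq_bigr => i _; rewrite !mxE rowK RU.
  rewrite (bigID (fun k : 'I_p => (k < t)%N)) /= big1 ?add0r; last first.
    by move=> k kt; rewrite mxE kt scale0r.
  by apply: eq_bigr => k kt; rewrite mxE (negbTE kt) rowK RE.
have {decomp} sum0 : v1 *m L *m pid_mx t + v2 = 0.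
  have Efree : row_free E by rewrite row_free_unit row_ebase_unit.
  by apply: (row_free_inj Efree); rewrite decomp mul0mx.
have v_bottom (k : 'I_p) : ~~ (k < t)%N -> v 0 k = 0.
  move=> kt; have /rowP /(_ k) := sum0; rewrite !mxE.
  by have := pid_row_bottom (v1 *m L) kt; rewrite mxE => ->; rewrite (negbTE kt) add0r.
have v1_0 : v1 = 0.
  have Lfree : row_free L by rewrite row_free_unit col_ebase_unit.
  apply: (row_free_inj Lfree); rewrite mul0mx; apply/rowP => i.
  have /rowP /(_ (top i)) := sum0; rewrite mxE [X in X + _ = _]pid_row_top.
  by rewrite [v2 _ _]mxE /= (ltn_ord i) addr0 !mxE.
apply/rowP => k; rewrite mxE.
case: (boolP (k < t)%N) => kt; last exact: v_bottom.
have /rowP /(_ (Ordinal kt)) := v1_0; rewrite !mxE => <-.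
by congr (v 0 _); apply: val_inj.
Qed.

End PartialCramer.

Section IndependentPoint.
Variables (F : fieldType) (n k : nat) (g : 'I_k -> ncpoly F).

Definition eval_mx (r : nat -> 'M[F]_n) : 'M[F]_(k, n * n) :=
  \matrix_(i < k) mxvec (nceval r (g i)).

Lemma loc_lin_indep_point : loc_lin_indep n g ->
  exists r : nat -> 'M[F]_n, forall a : 'I_k -> F,
    \sum_i a i *: nceval r (g i) = 0 -> forall i, a i = 0.
Proof.
move=> indep; apply: NNPP => no_point; apply: indep => r.
apply: NNPP => not_dep; apply: no_point; exists r => a rel i.
apply: NNPP => ai; apply: not_dep; exists a; split => //.
by exists i; apply/eqP.
Qed.

Lemma eval_mx_row_free r :
  (forall a : 'I_k -> F, \sum_i a i *: nceval r (g i) = 0 -> forall i, a i = 0) ->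
  row_free (eval_mx r).
Proof.
move=> indep; apply: inj_row_free => v vg; apply/rowP => i; rewrite mxE.
apply: (indep (fun i => v 0 i)) => //; apply/eqP; rewrite -mxvec_eq0.
rewrite linear_sum -[X in _ == X]vg mulmx_sum_row; apply/eqP; apply: eq_bigr => j _.
by rewrite linearZ; congr (_ *: _); apply/rowP => e; rewrite !mxE.
Qed.

End IndependentPoint.

Section Construction.
Variables (F : fieldType) (m t : nat) (f : 'I_t.+1 -> ncpoly F).
Local Notation n := m.+1.
Local Notation N := (n * n)%N.
Local Notation MM := 'M[F]_n.
Implicit Types (r : nat -> MM) (i : 'I_t.+1).

(* the variables x_j with j >= fresh_base occur in none of the f_i *)
Definition fresh_base : nat := \sum_i ncvar_bound (f i).

Lemma eval_f_agree i r r' :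
  (forall j, (j < fresh_base)%N -> r j = r' j) -> nceval r (f i) = nceval r' (f i).
Proof.
move=> rr'; apply: nceval_agree => j jb; apply: rr'.
by rewrite /fresh_base (bigD1 i) //=; exact: leq_trans jb (leq_addr _ _).
Qed.

(* the polynomial substituted for x_v in the central Capelli polynomial to
   form c_i: the x-slots receive f_1, ..., f_t (f_0 replacing f_i) and then
   fresh variables; the y-slots and W also receive fresh variables *)
Definition xsubst (i v : nat) : ncpoly F :=
  if (v < N)%N then
    if v.+1 == i then f ord0
    else if (v < t)%N then f (inord v.+1) else ncvar F (fresh_base + v)
  else ncvar F (fresh_base + v).

Definition csign i : F := if i == ord0 then 1 else -1.

Definition cpoly i : ncpoly F :=
  ncscale (csign i) (ncsubst (xsubst i) (@central_cap_poly F m)).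

(* the factor of the value of c_i not depending on i *)
Definition kappa r : F :=
  n%:R * \tr (capelli_core (fun j => r (fresh_base + (N + j))%N)
                *m r (fresh_base + (N + N.+1))%N).

Definition subst_mx r (i : nat) : 'M[F]_N :=
  coord_mx (fun v => nceval r (xsubst i v)).

Lemma eval_cpoly r i :
  nceval r (cpoly i) = (csign i * (kappa r * \det (subst_mx r i)))%:M.
Proof.
rewrite /cpoly nceval_scale nceval_subst eval_central_cap_poly central_cap_scalar.
rewrite scale_scalar_mx /kappa /subst_mx; congr ((_ * _)%:M).
rewrite (@capelli_core_agree _ _ _ (fun j => r (fresh_base + (N + j))%N)); last first.
  by move=> j _; rewrite /xsubst ltnNge leq_addr /= nceval_var.
by rewrite /xsubst ltnNge leq_addr /= nceval_var mulrAC.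
Qed.

Lemma cpoly_central i : central_poly n (cpoly i).
Proof. by move=> r; apply/is_scalar_mxP; eexists; exact: eval_cpoly. Qed.

Section Rows.
Variable (tN : (t <= N)%N).

Lemma row_subst_mx0 r (i : 'I_t) :
  row (widen_ord tN i) (subst_mx r 0) = mxvec (nceval r (f (lift ord0 i))).
Proof.
apply/rowP => e; rewrite !mxE /xsubst /= (leq_trans (ltn_ord i) tN) (ltn_ord i) /=.
congr (mxvec (nceval r (f _)) 0 e); apply: val_inj.
by rewrite /= inordK // ltnS; exact: (ltn_ord i).
Qed.

Lemma subst_mx_lift r (i : 'I_t) :
  subst_mx r (lift ord0 i) =
  rowupd (subst_mx r 0) (widen_ord tN i) (mxvec (nceval r (f ord0))).
Proof.
apply/matrixP => v e; rewrite /subst_mx /rowupd !mxE /xsubst (ltn_ord v) /=.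
have -> : (v.+1 == lift ord0 i :> nat) = (v == widen_ord tN i).
  by rewrite /= /bump /= add1n eqSS.
by case: (v == widen_ord tN i) => //; rewrite mxE.
Qed.

(* Cramer's rule turns a local dependence into the vanishing of sum_i c_i f_i *)
Lemma cpoly_sum_identity : loc_lin_dep n f ->
  poly_identity n (ncsum (fun i => ncmul (cpoly i) (f i))).
Proof.
move=> dep r; rewrite nceval_sum.
have [mu [nz rel]] := dep r.
pose A := subst_mx r 0; pose u := mxvec (nceval r (f ord0)).
have relA : top_relation tN A u mu.
  have := congr1 mxvec rel; rewrite linear_sum big_ord_recl /= linear0 => rel'.
  rewrite /top_relation -[RHS]rel' linearZ; congr (_ + _).
  by apply: eq_bigr => i _; rewrite row_subst_mx0 linearZ.
have := cramer_partial nz relA; under eq_bigr do rewrite -subst_mx_lift.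
move=> cramer; apply/eqP; rewrite -mxvec_eq0 linear_sum; apply/eqP.
under eq_bigr do rewrite nceval_mul eval_cpoly -mulmxE mul_scalar_mx linearZ /=.
rewrite big_ord_recl /csign eqxx mul1r.
under eq_bigr do rewrite eq_sym (negbTE (neq_lift _ _)) -row_subst_mx0 mulN1r scaleNr -scalerA.
by rewrite sumrN -scaler_sumr -cramer -scalerA subrr.
Qed.

End Rows.

(* The point at which c_0 does not vanish: f_1, ..., f_t take independent
   values (at r0), the remaining x-slots complete them to a basis, and the
   y-slots receive the chain of matrix units of CoreWitness. *)
Section Witness.
Variables (tN : (t <= N)%N) (r0 : nat -> MM).
Local Notation U := (eval_mx (fun i : 'I_t => f (lift ord0 i)) r0).

Definition witness_point (v : nat) : MM :=
  if (v < fresh_base)%N then r0 v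
  else if (v - fresh_base < N)%N then vec_mx (row (inord (v - fresh_base)) (row_ebase U))
  else if (v - fresh_base <= N + N)%N then chain_seq F m (v - fresh_base - N)
  else 1.

Lemma kappa_witness : kappa witness_point = n%:R.
Proof.
have fresh j : (fresh_base + (N + j) - fresh_base = N + j)%N by rewrite addKn.
rewrite /kappa (@capelli_core_agree _ _ _ (chain_seq F m)); last first.
  move=> j jN; rewrite /witness_point ltnNge leq_addr /= fresh ltnNge leq_addr /=.
  by rewrite leq_add2l jN addKn.
rewrite capelli_core_chain /witness_point ltnNge leq_addr /= fresh ltnNge leq_addr /=.
rewrite leq_add2l ltnn mulmx1 /mxtrace (bigD1 ord0) //= big1 ?addr0.
  by rewrite mxE !eqxx mulr1.
by move=> i /negbTE ni; rewrite mxE ni.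
Qed.

Lemma det_subst_mx_witness : row_free U -> \det (subst_mx witness_point 0) != 0.
Proof.
move=> rfU; set A := subst_mx _ _.
have -> : A = \matrix_(k < N) row k A by apply/matrixP => i j; rewrite !mxE.
apply: (completion (tp := tN) rfU) => [i|k kt].
  rewrite row_subst_mx0; apply/rowP => e; rewrite !mxE.
  congr (mxvec _ 0 e); apply: eval_f_agree => j jb.
  by rewrite /witness_point jb.
apply/rowP => e; rewrite !mxE /xsubst (ltn_ord k) /= (negbTE kt) nceval_var.
rewrite /witness_point ltnNge leq_addr /= addKn (ltn_ord k) inord_val.
by rewrite vec_mxK mxE.
Qed.

Lemma cpoly0_not_identity : [pchar F] =i pred0 -> row_free U ->
  ~ poly_identity n (cpoly ord0).
Proof.
move=> charF0 rfU /(_ witness_point).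
rewrite eval_cpoly /csign eqxx mul1r kappa_witness => /matrixP /(_ 0 0).
rewrite !mxE eqxx mulr1n => /eqP.
rewrite mulf_eq0 (negbTE (det_subst_mx_witness rfU)) orbF.
by move/pcharf0P: charF0 => ->.
Qed.

End Witness.

End Construction.

Unset Implicit Arguments.

Theorem mainTheorem13 (F : fieldType) (charF0 : [pchar F] =i pred0)
  (n : nat) (n_gt0 : (0 < n)%N) (t : nat) (f : 'I_t.+1 -> ncpoly F) :
  loc_lin_dep n f ->
  loc_lin_indep n (fun i : 'I_t => f (lift ord0 i)) ->
  exists c : 'I_t.+1 -> ncpoly F,
    (forall i, central_poly n (c i)) /\
    ~ poly_identity n (c ord0) /\
    poly_identity n (ncsum (fun i => ncmul (c i) (f i))).
Proof.
case: n n_gt0 => // m _ dep indep.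
have [r0 /eval_mx_row_free rfU] := loc_lin_indep_point indep.
have tN : (t <= m.+1 * m.+1)%N by rewrite -(eqP rfU) rank_leq_col.
exists (cpoly m f); split; first exact: cpoly_central.
split; first exact: (cpoly0_not_identity (f := f) tN charF0 rfU).
exact: cpoly_sum_identity.
Qed.
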